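(* If $\sum_{i=1}^M b_i<1$, then for every $\epsilon>0$, $$\bar\Delta_{\mathrm{opt}}(\epsilon)\ge\bar\Delta_{\mathrm{opt},2}(\epsilon)\ge\sum_{l=1}^M\frac{w_l}{b_l}\exp\!\Big(-\frac{\sum_{i=1}^M b_i}{1-\sum_{i=1}^M b_i}\,\epsilon\Big)+\sum_{l=1}^M w_l.$$
   Context: Fix an integer $M\ge1$, weights $w_1,\dots,w_M>0$, constants $b_1,\dots,b_M>0$, and $\epsilon>0$. For $\mathbf r\in(0,\infty)^M$ write $S(\mathbf r)=\sum_{i=1}^M r_i$ and define $$\bar\Delta(\mathbf r)=\sum_{l=1}^M \frac{w_l e^{-r_l\epsilon}}{r_l}\, e^{\epsilon S(\mathbf r)}\big(1+S(\mathbf r)\big)+\sum_{l=1}^M w_l,\qquad \sigma_l(\mathbf r)=\frac{(1-e^{-r_l\epsilon})S(\mathbf r)+r_le^{-r_l\epsilon}}{S(\mathbf r)+1}.$$ Problem 1: minimize $\bar\Delta(\mathbf r)$ over $\mathbf r\in(0,\infty)^M$ subject to $\sigma_l(\mathbf r)\le b_l$ for all $l$; its optimal (infimum) value is $\bar\Delta_{\mathrm{opt}}(\epsilon)$. Problem 2: minimize $\bar\Delta(\mathbf r)$ over $\mathbf r\in(0,\infty)^M$ subject to $r_l\le b_l\big(S(\mathbf r)+1\big)$ for all $l$; its optimal (infimum) value is $\bar\Delta_{\mathrm{opt},2}(\epsilon)$. *)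

From Stdlib Require Import Reals Lra.
Open Scope R_scope.

(* Indices 1..M of the paper are represented as 0..M-1; vectors are nat -> R. *)
Fixpoint rsum (n : nat) (f : nat -> R) : R :=
  match n with
  | O => 0
  | S k => rsum k f + f k
  end.

Definition Ssum (M : nat) (r : nat -> R) : R := rsum M r.

Definition Dbar (M : nat) (w : nat -> R) (eps : R) (r : nat -> R) : R :=
  rsum M (fun l => w l * exp (- (r l * eps)) / r l
                   * exp (eps * Ssum M r) * (1 + Ssum M r))
  + rsum M w.

Definition sigma (M : nat) (eps : R) (r : nat -> R) (l : nat) : R :=
  ((1 - exp (- (r l * eps))) * Ssum M r + r l * exp (- (r l * eps)))
  / (Ssum M r + 1).

Definition positive_vec (M : nat) (r : nat -> R) : Prop :=
  forall i, (i < M)%nat -> 0 < r i.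

Definition feasible1 (M : nat) (b : nat -> R) (eps : R) (r : nat -> R) : Prop :=
  positive_vec M r /\ forall l, (l < M)%nat -> sigma M eps r l <= b l.

Definition feasible2 (M : nat) (b : nat -> R) (r : nat -> R) : Prop :=
  positive_vec M r /\ forall l, (l < M)%nat -> r l <= b l * (Ssum M r + 1).

Definition values1 (M : nat) (w b : nat -> R) (eps : R) (v : R) : Prop :=
  exists r, feasible1 M b eps r /\ v = Dbar M w eps r.

Definition values2 (M : nat) (w b : nat -> R) (eps : R) (v : R) : Prop :=
  exists r, feasible2 M b r /\ v = Dbar M w eps r.

Definition is_glb (E : R -> Prop) (m : R) : Prop :=
  (forall x, E x -> m <= x) /\
  (forall m', (forall x, E x -> m' <= x) -> m' <= m).

(* Problem 2 is a relaxation of Problem 1: since [r_l <= S], the constraint [sigma_l <= b_l]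
   already forces [r_l / (S + 1) <= sigma_l <= b_l].  On the feasible set of Problem 2 every
   summand of [Dbar] is at least [w_l (1 + S) / r_l >= w_l / b_l], because
   [exp (- r_l eps) exp (eps S) >= 1]; the exponential factor of the claimed bound is at most 1. *)

From Pilot Require Import Defs.
From Stdlib Require Import Reals Lra Lia.
Open Scope R_scope.

Lemma rsum_le n f g :
  (forall i, (i < n)%nat -> f i <= g i) -> rsum n f <= rsum n g.
Proof.
  induction n as [|n IH]; simpl; intros Hfg; [lra|].
  assert (rsum n f <= rsum n g) by (apply IH; intros; apply Hfg; lia).
  assert (f n <= g n) by (apply Hfg; lia).
  lra.
Qed.

Lemma rsum_mulr n f c : rsum n f * c = rsum n (fun i => f i * c).
Proof. induction n as [|n IH]; simpl; [ring | rewrite <- IH; ring]. Qed.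

Lemma rsum_ge0 n f : (forall i, (i < n)%nat -> 0 <= f i) -> 0 <= rsum n f.
Proof.
  intros Hf; replace 0 with (rsum n (fun _ => 0)).
  - apply rsum_le; exact Hf.
  - clear; induction n as [|n IH]; simpl; lra.
Qed.

Lemma rsum_ge_term n f l :
  (forall i, (i < n)%nat -> 0 <= f i) -> (l < n)%nat -> f l <= rsum n f.
Proof.
  induction n as [|n IH]; simpl; intros Hf Hl; [lia|].
  assert (0 <= rsum n f) by (apply rsum_ge0; intros; apply Hf; lia).
  destruct (Nat.eq_dec l n) as [->|Hne]; [lra|].
  assert (f l <= rsum n f) by (apply IH; [intros; apply Hf | ]; lia).
  assert (0 <= f n) by (apply Hf; lia).
  lra.
Qed.

Lemma exp_le_1 x : x <= 0 -> exp x <= 1.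
Proof.
  intros [Hx|Hx]; [|rewrite Hx, exp_0; lra].
  rewrite <- exp_0; left; apply exp_increasing, Hx.
Qed.

Lemma exp_ge_1 x : 0 <= x -> 1 <= exp x.
Proof. intros Hx; pose proof (exp_ineq1_le x); lra. Qed.

Lemma is_glb_le_lb (E : R -> Prop) m c : is_glb E m -> (forall x, E x -> c <= x) -> c <= m.
Proof. intros [_ Hgreatest] Hc; exact (Hgreatest c Hc). Qed.

Lemma is_glb_subset (E F : R -> Prop) m n :
  (forall x, E x -> F x) -> is_glb E m -> is_glb F n -> n <= m.
Proof.
  intros EF Hm [Hn _]; apply (is_glb_le_lb E); [exact Hm|].
  intros x Ex; apply Hn, EF, Ex.
Qed.

Section Feasibility.

Variables (M : nat) (eps : R) (r : nat -> R).
Hypothesis eps_ge0 : 0 <= eps.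
Hypothesis r_pos : positive_vec M r.

Lemma le_Ssum l : (l < M)%nat -> r l <= Ssum M r.
Proof. apply rsum_ge_term; intros i Hi; left; apply r_pos, Hi. Qed.

Lemma Ssum_ge0 : 0 <= Ssum M r.
Proof. apply rsum_ge0; intros i Hi; left; apply r_pos, Hi. Qed.

Lemma ratio_le_sigma l : (l < M)%nat -> r l / (Ssum M r + 1) <= Defs.sigma M eps r l.
Proof.
  intros Hl; unfold Defs.sigma.
  pose proof (le_Ssum l Hl) as HrS; pose proof Ssum_ge0 as HS.
  set (S := Ssum M r) in *; set (e := exp (- (r l * eps))).
  assert (He : e <= 1).
  { apply exp_le_1; pose proof (r_pos l Hl); nra. }
  apply Rmult_le_compat_r; [left; apply Rinv_0_lt_compat; lra|].
  (* r_l = r_l (1 - e) + r_l e, and r_l (1 - e) <= S (1 - e) *)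
  nra.
Qed.

Lemma le_of_sigma_le b l :
  (l < M)%nat -> Defs.sigma M eps r l <= b -> r l <= b * (Ssum M r + 1).
Proof.
  intros Hl Hsig; pose proof (ratio_le_sigma l Hl) as Hratio; pose proof Ssum_ge0.
  apply (Rmult_le_reg_r (/ (Ssum M r + 1))); [apply Rinv_0_lt_compat; lra|].
  replace (b * (Ssum M r + 1) * / (Ssum M r + 1)) with b by (field; lra).
  unfold Rdiv in Hratio; lra.
Qed.

End Feasibility.

Lemma feasible1_feasible2 M b eps r :
  0 <= eps -> feasible1 M b eps r -> feasible2 M b r.
Proof.
  intros Heps [Hpos Hsig]; split; [exact Hpos|].
  intros l Hl; apply (le_of_sigma_le M eps); auto.
Qed.

Lemma Dbar_term_ge w b eps S rl :
  0 < w -> 0 < b -> 0 < rl -> rl <= S -> 0 <= eps -> rl <= b * (S + 1) ->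
  w / b <= w * exp (- (rl * eps)) / rl * exp (eps * S) * (1 + S).
Proof.
  intros Hw Hb Hr HrS Heps Hfeas.
  assert (Hexp : 1 <= exp (- (rl * eps)) * exp (eps * S)).
  { rewrite <- exp_plus; apply exp_ge_1; nra. }
  assert (Hratio : w / b <= w * (1 + S) / rl).
  { apply (Rmult_le_reg_r (b * rl)); [nra|].
    replace (w / b * (b * rl)) with (w * rl) by (field; lra).
    replace (w * (1 + S) / rl * (b * rl)) with (w * (b * (S + 1))) by (field; lra).
    apply Rmult_le_compat_l; lra. }
  replace (w * exp (- (rl * eps)) / rl * exp (eps * S) * (1 + S))
    with (exp (- (rl * eps)) * exp (eps * S) * (w * (1 + S) / rl)) by (field; lra).
  assert (0 < w * (1 + S) / rl) by (apply Rdiv_lt_0_compat; nra).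
  nra.
Qed.

Lemma Dbar_feasible2_ge M w b eps r :
  (forall i, (i < M)%nat -> 0 < w i) -> (forall i, (i < M)%nat -> 0 < b i) ->
  0 <= eps -> feasible2 M b r ->
  rsum M (fun l => w l / b l) + rsum M w <= Dbar M w eps r.
Proof.
  intros Hw Hb Heps [Hpos Hfeas]; unfold Dbar.
  apply Rplus_le_compat_r, rsum_le; intros l Hl.
  apply Dbar_term_ge; auto.
  exact (le_Ssum M r Hpos l Hl).
Qed.

Theorem lemma6 (M : nat) (w b : nat -> R) (eps : R) :
  (1 <= M)%nat ->
  (forall i, (i < M)%nat -> 0 < w i) ->
  (forall i, (i < M)%nat -> 0 < b i) ->
  0 < eps ->
  rsum M b < 1 ->
  forall Dopt Dopt2 : R,
    is_glb (values1 M w b eps) Dopt ->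
    is_glb (values2 M w b eps) Dopt2 ->
    Dopt >= Dopt2 /\
    Dopt2 >= rsum M (fun l => w l / b l)
               * exp (- (rsum M b / (1 - rsum M b) * eps))
             + rsum M w.
Proof.
  intros _ Hw Hb Heps HB Dopt Dopt2 Hglb1 Hglb2.
  split; apply Rle_ge.
  - apply (is_glb_subset (values1 M w b eps) (values2 M w b eps)); auto.
    intros x [r [Hr ->]]; exists r; split; [apply (feasible1_feasible2 M b eps r)|]; auto; lra.
  - assert (Hexp : exp (- (rsum M b / (1 - rsum M b) * eps)) <= 1).
    { apply exp_le_1.
      assert (0 <= rsum M b) by (apply rsum_ge0; intros; left; auto).
      assert (0 <= rsum M b / (1 - rsum M b)) by (apply Rmult_le_pos; [|left; apply Rinv_0_lt_compat]; lra).
      nra. }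
    assert (Hwb : 0 <= rsum M (fun l => w l / b l)).
    { apply rsum_ge0; intros l Hl; left; apply Rdiv_lt_0_compat; auto. }
    apply Rle_trans with (rsum M (fun l => w l / b l) + rsum M w); [nra|].
    apply (is_glb_le_lb _ _ _ Hglb2).
    intros x [r [Hr ->]]; apply Dbar_feasible2_ge; auto; lra.
Qed.
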